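(* Let $S$ be an inverse semigroup that is a mirror semigroup, with semilattice of idempotents $\Sigma$. If $(S,\leqslant)$ is a continuous poset (resp. a dcpo, a domain, an algebraic poset), then $(\Sigma,\leqslant)$ is a continuous poset (resp. a dcpo, a domain, an algebraic poset).
   Context: An inverse semigroup is a semigroup $S$ in which every $s$ has a unique $s^*$ with $ss^*s=s$ and $s^*ss^*=s^*$. $\Sigma=\Sigma(S)$ is the set of idempotents. The intrinsic order is $s\leqslant t$ iff $s=t\epsilon$ for some idempotent $\epsilon$. A subset is directed if nonempty and any two elements have an upper bound in it. $S$ is a mirror semigroup if every directed subset of $\Sigma$ having a supremum in $(\Sigma,\leqslant)$ also has a supremum in $(S,\leqslant)$. In a poset, $x$ is way-below $y$ ($x\ll y$) if for every directed subset $D$ that has a supremum with $y\leqslant \sup D$, there is $d\in D$ with $x\leqslant d$. A poset is continuous if for every $s$ the set $\{t : t\ll s\}$ is directed with supremum $s$. A dcpo is a poset in which every directed subset has a supremum; a domain is a continuous dcpo. An element $k$ is compact if $k\ll k$; a poset is algebraic if every element is the supremum of the directed set of compact elements below it. *)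

Record InvSemigroup := {
  carrier :> Type;
  mul : carrier -> carrier -> carrier;
  mulA : forall x y z, mul x (mul y z) = mul (mul x y) z;
  star : carrier -> carrier;
  star_l : forall s, mul (mul s (star s)) s = s;
  star_r : forall s, mul (mul (star s) s) (star s) = star s;
  star_uniq : forall s t, mul (mul s t) s = s -> mul (mul t s) t = t -> t = star s
}.

Section Defs.
Variable S : InvSemigroup.

Definition idem (e : S) : Prop := mul S e e = e.

Definition ileq (s t : S) : Prop := exists e, idem e /\ s = mul S t e.

Definition fullset (s : S) : Prop := True.
End Defs.

(** Generic poset notions for the subposet (P, le) of a type T
    (le restricted to elements satisfying P). *)
Section PosetNotions.
Context {T : Type}. Variables (le : T -> T -> Prop) (P : T -> Prop).

Definition directed (D : T -> Prop) : Prop :=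
  (forall x, D x -> P x) /\ (exists x, D x) /\
  (forall x y, D x -> D y -> exists z, D z /\ le x z /\ le y z).

Definition is_sup (D : T -> Prop) (s : T) : Prop :=
  P s /\ (forall d, D d -> le d s) /\
  (forall u, P u -> (forall d, D d -> le d u) -> le s u).

Definition way_below (x y : T) : Prop :=
  forall D s, directed D -> is_sup D s -> le y s -> exists d, D d /\ le x d.

Definition continuous_poset : Prop :=
  forall s, P s ->
    directed (fun t => P t /\ way_below t s) /\
    is_sup (fun t => P t /\ way_below t s) s.

Definition dcpo : Prop :=
  forall D, directed D -> exists s, is_sup D s.

Definition domain : Prop := continuous_poset /\ dcpo.

Definition compact (k : T) : Prop := way_below k k.

Definition algebraic_poset : Prop :=
  forall s, P s ->
    directed (fun k => P k /\ compact k /\ le k s) /\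
    is_sup (fun k => P k /\ compact k /\ le k s) s.
End PosetNotions.

Definition mirror (S : InvSemigroup) : Prop :=
  forall D : S -> Prop,
    directed (ileq S) (idem S) D ->
    (exists s, is_sup (ileq S) (idem S) D s) ->
    exists s, is_sup (ileq S) (fullset S) D s.

From Stdlib Require Import Setoid.

(* The idempotents form a down-set of S, and the supremum t in S of a set of
   idempotents is again idempotent, because t t* is an upper bound and t <= t t*.
   Hence directed sets of idempotents have the same suprema in Sigma as in S
   (for the sups that exist in Sigma this is the mirror hypothesis), so
   way-below in S between idempotents implies way-below in Sigma.  For an
   idempotent e, the elements way below e (or compact and below e) in S are
   therefore idempotents with the same property in Sigma, and they are cofinal
   among the corresponding elements of Sigma; this transfers directedness and
   the supremum e. *)

Section Subposets.
Context {T : Type}.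
Variable le : T -> T -> Prop.

Lemma directed_sub (P Q D : T -> Prop) :
  (forall x, D x -> Q x) -> directed le P D -> directed le Q D.
Proof. intros DQ [_ [Dne Ddir]]. repeat split; assumption. Qed.

Lemma is_sup_sub (P Q D : T -> Prop) s :
  (forall x, Q x -> P x) -> Q s -> is_sup le P D s -> is_sup le Q D s.
Proof.
  intros QP Qs [_ [Hub Hleast]]. repeat split; [exact Qs | exact Hub |].
  intros u Qu Hu. exact (Hleast u (QP u Qu) Hu).
Qed.

Lemma way_below_sub_sup (P Q A : T -> Prop) x y s :
  (forall a, A a -> P a) -> (forall z, P z -> Q z) -> P s ->
  way_below le P x y -> directed le Q A -> is_sup le Q A s -> le y s ->
  exists a, A a /\ le x a.
Proof.
  intros AP PQ Ps Hxy Hdir Hsup Hys.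
  exact (Hxy A s (directed_sub Q P A AP Hdir) (is_sup_sub Q P A s PQ Ps Hsup) Hys).
Qed.

Hypothesis le_refl : forall x, le x x.
Hypothesis le_trans : forall x y z, le x y -> le y z -> le x z.

Lemma way_below_le (P : T -> Prop) x y : P y -> way_below le P x y -> le x y.
Proof.
  intros Py Hxy.
  destruct (Hxy (fun z => z = y) y) as [d [-> Hxd]]; [| | apply le_refl | exact Hxd].
  - repeat split; [now intros z -> | now exists y |].
    intros a b -> ->. exists y. auto.
  - repeat split; [exact Py | now intros d -> |].
    intros u _ Hu. now apply Hu.
Qed.

Lemma cofinal_directed_sup (P Q A B : T -> Prop) s :
  (forall z, P z -> Q z) -> directed le Q A -> is_sup le Q A s -> P s ->
  (forall b, B b -> P b) -> (forall a, A a -> B a) ->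
  (forall b, B b -> exists a, A a /\ le b a) ->
  directed le P B /\ is_sup le P B s.
Proof.
  intros PQ [_ [[a0 Aa0] Adir]] [_ [Aub Aleast]] Ps BP AB Bcof.
  split; [repeat split|repeat split].
  - exact BP.
  - exists a0. exact (AB a0 Aa0).
  - intros x y Bx By.
    destruct (Bcof x Bx) as [a1 [Aa1 Hxa1]], (Bcof y By) as [a2 [Aa2 Hya2]].
    destruct (Adir a1 a2 Aa1 Aa2) as [z [Az [Ha1z Ha2z]]].
    exists z. split; [exact (AB z Az) | split; eauto].
  - exact Ps.
  - intros b Bb. destruct (Bcof b Bb) as [a [Aa Hba]]. eauto.
  - intros u Pu Hu. apply (Aleast u (PQ u Pu)). auto.
Qed.

End Subposets.

Section InverseSemigroup.
Variable S : InvSemigroup.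
Local Notation "x * y" := (mul S x y).

Lemma star_idem e : idem S e -> star S e = e.
Proof. intros He. symmetry. apply star_uniq; unfold idem in He; now rewrite !He. Qed.

Lemma mul_idem_r e z : idem S e -> z * e * e = z * e.
Proof. intros He. now rewrite <- mulA, He. Qed.

Lemma idem_star_l s : idem S (star S s * s).
Proof. unfold idem. now rewrite mulA, star_r. Qed.

Lemma idem_star_r s : idem S (s * star S s).
Proof. unfold idem. now rewrite mulA, star_l. Qed.

(* With x := (e f)*, the element f x e is also an inverse of e f, hence equals x;
   so x is idempotent and e f, being the inverse of x, equals x. *)
Lemma idem_mul e f : idem S e -> idem S f -> idem S (e * f).
Proof.
  intros He Hf.
  set (x := star S (e * f)).
  assert (Hl : e * f * x * e * f = e * f).
  { pose proof (star_l S (e * f)) as H. rewrite !mulA in H. exact H. }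
  assert (Hr : forall z, z * x * e * f * x = z * x).
  { intros z. pose proof (f_equal (mul S z) (star_r S (e * f))) as H.
    rewrite !mulA in H. exact H. }
  assert (Hfxe : f * x * e = x).
  { apply star_uniq; rewrite !mulA, !mul_idem_r by assumption; [exact Hl | now rewrite Hr]. }
  assert (Hx : idem S x).
  { unfold idem. rewrite <- Hfxe at 1 2. rewrite !mulA, Hr. exact Hfxe. }
  assert (Hef : e * f = star S x) by (apply star_uniq; [apply star_r | apply star_l]).
  unfold idem. now rewrite Hef, star_idem.
Qed.

Lemma ileq_refl s : ileq S s s.
Proof. exists (star S s * s). split; [apply idem_star_l | now rewrite mulA, star_l]. Qed.

Lemma ileq_trans s t u : ileq S s t -> ileq S t u -> ileq S s u.
Proof.
  intros [e [He ->]] [f [Hf ->]]. exists (f * e).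
  split; [now apply idem_mul | now rewrite mulA].
Qed.

Lemma idem_ileq x e : ileq S x e -> idem S e -> idem S x.
Proof. intros [f [Hf ->]] He. now apply idem_mul. Qed.

Lemma idem_sup (D : S -> Prop) t :
  (forall d, D d -> idem S d) -> is_sup (ileq S) (fullset S) D t -> idem S t.
Proof.
  intros DE [_ [Hub Hleast]].
  apply (idem_ileq t (t * star S t)); [| apply idem_star_r].
  apply (Hleast _ I). intros d Dd.
  exists d. split; [exact (DE d Dd) |].
  destruct (Hub d Dd) as [f [Hf Hdf]].
  rewrite Hdf at 2. now rewrite mulA, star_l.
Qed.

Lemma is_sup_idem (D : S -> Prop) t :
  (forall d, D d -> idem S d) ->
  is_sup (ileq S) (fullset S) D t -> is_sup (ileq S) (idem S) D t.
Proof.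
  intros DE Ht. apply (is_sup_sub _ (fullset S)); [easy | | exact Ht].
  exact (idem_sup D t DE Ht).
Qed.

Lemma dcpo_idem : dcpo (ileq S) (fullset S) -> dcpo (ileq S) (idem S).
Proof.
  intros HS D Hdir.
  destruct (HS D (directed_sub _ (idem S) _ D (fun _ _ => I) Hdir)) as [t Ht].
  exists t. apply is_sup_idem; [apply Hdir | exact Ht].
Qed.

Section Mirror.
Hypothesis mirror_S : mirror S.

Lemma mirror_is_sup (D : S -> Prop) s :
  directed (ileq S) (idem S) D ->
  is_sup (ileq S) (idem S) D s -> is_sup (ileq S) (fullset S) D s.
Proof.
  intros Hdir Hs.
  destruct (mirror_S D Hdir (ex_intro _ s Hs)) as [t Ht].
  pose proof (is_sup_idem D t (proj1 Hdir) Ht) as [Et [Htub _]].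
  destruct Hs as [_ [Hsub Hsleast]], Ht as [_ [_ Htleast]].
  assert (Hst : ileq S s t) by exact (Hsleast t Et Htub).
  repeat split; [exact Hsub |].
  intros u _ Hu. exact (ileq_trans s t u Hst (Htleast u I Hu)).
Qed.

Lemma mirror_way_below x y :
  way_below (ileq S) (fullset S) x y -> way_below (ileq S) (idem S) x y.
Proof.
  intros Hxy D s Hdir Hs Hys.
  apply (Hxy D s); [| now apply mirror_is_sup | exact Hys].
  exact (directed_sub _ _ _ D (fun _ _ => I) Hdir).
Qed.

Lemma continuous_idem :
  continuous_poset (ileq S) (fullset S) -> continuous_poset (ileq S) (idem S).
Proof.
  intros HS e Ee.
  destruct (HS e I) as [Hdir Hsup].
  assert (AE : forall t, fullset S t /\ way_below (ileq S) (fullset S) t e -> idem S t).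
  { intros t [_ Hte]. apply (idem_ileq t e); [| exact Ee].
    exact (way_below_le _ ileq_refl _ t e I Hte). }
  apply (cofinal_directed_sup _ ileq_trans _ _ _ _ _ (fun _ _ => I) Hdir Hsup Ee);
    [now intros t [] | |].
  - intros t At. split; [exact (AE t At) | apply mirror_way_below, At].
  - intros x [_ Hxe].
    exact (way_below_sub_sup _ _ _ _ x e e AE (fun _ _ => I) Ee Hxe Hdir Hsup (ileq_refl e)).
Qed.

Lemma algebraic_idem :
  algebraic_poset (ileq S) (fullset S) -> algebraic_poset (ileq S) (idem S).
Proof.
  intros HS e Ee.
  destruct (HS e I) as [Hdir Hsup].
  assert (AE : forall k, fullset S k /\ compact (ileq S) (fullset S) k /\ ileq S k e -> idem S k).
  { intros k [_ [_ Hke]]. exact (idem_ileq k e Hke Ee). }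
  apply (cofinal_directed_sup _ ileq_trans _ _ _ _ _ (fun _ _ => I) Hdir Hsup Ee);
    [now intros k [] | |].
  - intros k Ak. split; [exact (AE k Ak) |].
    destruct Ak as [_ [Kk Hke]]. split; [exact (mirror_way_below k k Kk) | exact Hke].
  - intros k [_ [Kk Hke]].
    exact (way_below_sub_sup _ _ _ _ k k e AE (fun _ _ => I) Ee Kk Hdir Hsup Hke).
Qed.

End Mirror.
End InverseSemigroup.

Theorem lemma5p2 (S : InvSemigroup) (HM : mirror S) :
  (continuous_poset (ileq S) (fullset S) -> continuous_poset (ileq S) (idem S)) /\
  (dcpo (ileq S) (fullset S) -> dcpo (ileq S) (idem S)) /\
  (domain (ileq S) (fullset S) -> domain (ileq S) (idem S)) /\
  (algebraic_poset (ileq S) (fullset S) -> algebraic_poset (ileq S) (idem S)).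
Proof.
  split; [exact (continuous_idem S HM) |].
  split; [exact (dcpo_idem S) |].
  split; [| exact (algebraic_idem S HM)].
  intros [HC HD]. exact (conj (continuous_idem S HM HC) (dcpo_idem S HD)).
Qed.
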